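(* Let $G$ be a finite symmetric two-player game with pure strategies $I=\{1,\dots,N\}$ and payoff matrix $U$, and let $G'$ be a game built on $G$ by adding mixed strategies as new pure strategies, with associated mixed strategies $p^k\in S_N$, $k\in I'=\{1,\dots,N'\}$. Let $x'(\cdot)$ be a solution of the best-response dynamics in $G'$ and define $x(t):=\sum_{k=1}^{N'}x'_k(t)\,p^k\in S_N$. Then $x(\cdot)$ is a solution of the best-response dynamics in $G$.
   Context: $G'$ with pure strategy set $I'=\{1,\dots,N,N+1,\dots,N'\}$ and payoff matrix $U'$ is built on $G$ by adding mixed strategies as new pure strategies if to each $i\in I'$ is associated $p^i\in S_N$ such that $e'_i\cdot U'e'_j=p^i\cdot Up^j$ for all $i,j\in I'$ (with $e'_i$ the vertices of $S_{N'}$), and $p^i=e_i$ for $1\le i\le N$. Best-response dynamics in a game with payoff matrix $U$: an absolutely continuous function $x(\cdot)$ with $\dot x(t)\in BR(x(t))-x(t)$ for almost every $t$, where $BR(x)=\{y\in S_N: y\cdot Ux=\max_{z\in S_N}z\cdot Ux\}$. *)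

From HB Require Import structures.
From mathcomp Require Import all_boot all_order all_algebra.
From mathcomp Require Import all_classical all_reals all_analysis.
Set Implicit Arguments. Unset Strict Implicit. Unset Printing Implicit Defensive.
Import Order.TTheory GRing.Theory Num.Theory.
Import numFieldNormedType.Exports.
Local Open Scope classical_set_scope.
Local Open Scope ring_scope.

Definition simplex (R : realType) (N : nat) : set ('I_N -> R) :=
  [set p | (forall i, 0 <= p i) /\ \sum_(i < N) p i = 1].

Definition evec (R : realType) (N : nat) (i : 'I_N) : 'I_N -> R :=
  fun j => (i == j)%:R.

Definition payoff (R : realType) (N : nat) (U : 'M[R]_N) (y x : 'I_N -> R) : R :=
  \sum_(i < N) \sum_(j < N) y i * U i j * x j.

Definition BR (R : realType) (N : nat) (U : 'M[R]_N) (x : 'I_N -> R)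
  : set ('I_N -> R) :=
  [set y | @simplex R N y /\
           forall z, @simplex R N z -> payoff U z x <= payoff U y x].

(* G' (with N' pure strategies, payoff matrix U') is built on G (payoff
   matrix U) by adding mixed strategies as new pure strategies, with
   associated mixed strategies p k; the first N pure strategies of G'
   are those of G. *)
Definition built_on (R : realType) (N N' : nat) (U : 'M[R]_N) (U' : 'M[R]_N')
  (hNN' : (N <= N')%N) (p : 'I_N' -> 'I_N -> R) : Prop :=
  (forall k, @simplex R N (p k)) /\
  (forall i j, U' i j = payoff U (p i) (p j)) /\
  (forall i : 'I_N, p (widen_ord hNN' i) = @evec R N i).

Definition abs_continuous_on (R : realType) (a b : R) (f : R -> R) : Prop :=
  forall e : R, 0 < e -> exists2 d : R, 0 < d &
    forall (n : nat) (l r : 'I_n -> R),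
      (forall k, a <= l k /\ l k <= r k /\ r k <= b) ->
      (forall k k', k != k' -> r k <= l k' \/ r k' <= l k) ->
      \sum_(k < n) (r k - l k) < d ->
      \sum_(k < n) `|f (r k) - f (l k)| < e.

Definition BR_solution (R : realType) (N : nat) (U : 'M[R]_N)
  (x : R -> 'I_N -> R) : Prop :=
  (forall t, 0 <= t -> @simplex R N (x t)) /\
  (forall b, 0 <= b -> forall i, abs_continuous_on 0 b (fun t => x t i)) /\
  {ae (@lebesgue_measure R), forall t : R, 0 <= t ->
     (forall i, derivable (fun s => x s i) t 1) /\
     exists2 y, BR U (x t) y &
       forall i, derive1 (fun s => x s i) t = y i - x t i}.

From HB Require Import structures.
From mathcomp Require Import all_boot all_order all_algebra.
From mathcomp Require Import all_classical all_reals all_analysis.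
Import Order.TTheory GRing.Theory Num.Theory.
Set Implicit Arguments.
Unset Strict Implicit.
Unset Printing Implicit Defensive.

Local Open Scope ring_scope.

(* The map [mix : a |-> \sum_k a_k p^k] from S_N' to S_N carries the payoff of
   G' to that of G, and it is onto because G' contains copies of the pure
   strategies of G.  Hence it sends best responses in G' to best responses in
   G.  Being linear with constant coefficients, it also preserves absolute
   continuity and commutes with differentiation, so it maps a solution x' of
   the best-response dynamics of G' to a solution [mix \o x'] for G. *)

Section AbsoluteContinuity.
Variables (R : realType) (a b : R).

Lemma abs_continuous_on_cst (c : R) : abs_continuous_on a b (cst c).
Proof.
move=> e e0; exists 1 => // n l r _ _ _.
by rewrite big1 // => k _; rewrite subrr normr0.
Qed.

Lemma abs_continuous_onD (f g : R -> R) :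
  abs_continuous_on a b f -> abs_continuous_on a b g ->
  abs_continuous_on a b (f + g).
Proof.
move=> hf hg e e0.
have [df df0 Hf] := hf _ (divr_gt0 e0 (ltr0Sn _ 1)).
have [dg dg0 Hg] := hg _ (divr_gt0 e0 (ltr0Sn _ 1)).
exists (Num.min df dg) => [|n l r lr_in lr_disj].
  by rewrite lt_min df0 dg0.
rewrite lt_min => /andP[sum_df sum_dg].
apply: (le_lt_trans (y := \sum_(k < n)
  (`|f (r k) - f (l k)| + `|g (r k) - g (l k)|))).
  apply: ler_sum => k _; rewrite /= opprD addrACA.
  exact: ler_normD.
by rewrite big_split /= (splitr e) ltrD // ?Hf ?Hg.
Qed.

Lemma abs_continuous_onMr (f : R -> R) (c : R) :
  abs_continuous_on a b f -> abs_continuous_on a b (fun t => f t * c).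
Proof.
move=> hf e e0.
have c1_gt0 : 0 < `|c| + 1 by rewrite ltr_wpDl.
have [d d0 Hf] := hf _ (divr_gt0 e0 c1_gt0).
exists d => // n l r lr_in lr_disj sum_d.
have := Hf n l r lr_in lr_disj sum_d.
rewrite ltr_pdivlMr // => /(le_lt_trans _); apply.
rewrite mulr_suml; apply: ler_sum => k _.
by rewrite -mulrBl normrM ler_wpM2l // lerDl.
Qed.

Lemma abs_continuous_on_sum n (F : 'I_n -> R -> R) :
  (forall k, abs_continuous_on a b (F k)) ->
  abs_continuous_on a b (fun t => \sum_(k < n) F k t).
Proof.
move=> hF; have -> : (fun t => \sum_(k < n) F k t) = \sum_(k < n) F k.
  by apply/funext => t; rewrite fct_sumE.
apply: big_ind => //; first exact: abs_continuous_on_cst.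
exact: abs_continuous_onD.
Qed.

End AbsoluteContinuity.

Lemma is_derive_sum_mulr (R : realType) n (f : 'I_n -> R -> R)
    (c : 'I_n -> R) t :
  (forall k, derivable (f k) t 1) ->
  is_derive t 1 (fun s => \sum_(k < n) f k s * c k)
    (\sum_(k < n) 'D_1 (f k) t * c k).
Proof.
move=> df.
have -> : (fun s => \sum_(k < n) f k s * c k) = \sum_(k < n) (c k \*: f k).
  by apply/funext => s; rewrite fct_sumE; apply: eq_bigr => k _; rewrite mulrC.
rewrite (eq_bigr (fun k => c k *: 'D_1 (f k) t)) => [|k _]; last exact: mulrC.
apply: is_derive_sum => k; apply: is_deriveZ; exact: derivableP.
Qed.

Section Payoff.
Variables (R : realType) (N : nat) (U : 'M[R]_N).

Lemma payoff_suml M (a : 'I_M -> R) (q : 'I_M -> 'I_N -> R) y :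
  payoff U (fun i => \sum_(k < M) a k * q k i) y =
  \sum_(k < M) a k * payoff U (q k) y.
Proof.
rewrite /payoff; under [RHS]eq_bigr do rewrite mulr_sumr.
rewrite [RHS]exchange_big; apply: eq_bigr => i _ /=.
under [RHS]eq_bigr do rewrite mulr_sumr.
rewrite [RHS]exchange_big; apply: eq_bigr => j _ /=.
by rewrite !mulr_suml; apply: eq_bigr => k _; rewrite !mulrA.
Qed.

Lemma payoff_sumr M (b : 'I_M -> R) (q : 'I_M -> 'I_N -> R) y :
  payoff U y (fun j => \sum_(l < M) b l * q l j) =
  \sum_(l < M) payoff U y (q l) * b l.
Proof.
rewrite /payoff; under [RHS]eq_bigr do rewrite mulr_suml.
rewrite [RHS]exchange_big; apply: eq_bigr => i _ /=.
under [RHS]eq_bigr do rewrite mulr_suml.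
rewrite [RHS]exchange_big; apply: eq_bigr => j _ /=.
rewrite !mulr_sumr; apply: eq_bigr => l _.
by rewrite mulrCA [_ * b l]mulrC !mulrA.
Qed.

End Payoff.

Section Mixing.
Variables (R : realType) (N N' : nat) (p : 'I_N' -> 'I_N -> R).
Hypothesis p_simplex : forall k, simplex (p k).

Definition mix (a : 'I_N' -> R) : 'I_N -> R :=
  fun j => \sum_(k < N') a k * p k j.

Lemma simplex_mix a : simplex a -> simplex (mix a).
Proof.
move=> [a_ge0 a_sum1]; split=> [j|].
  by apply: sumr_ge0 => k _; rewrite mulr_ge0 //; case: (p_simplex k).
rewrite /mix exchange_big /= -[RHS]a_sum1; apply: eq_bigr => k _.
by rewrite -mulr_sumr; case: (p_simplex k) => _ ->; rewrite mulr1.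
Qed.

Lemma payoff_mix (U : 'M[R]_N) (U' : 'M[R]_N') :
  (forall k l, U' k l = payoff U (p k) (p l)) ->
  forall a b, payoff U' a b = payoff U (mix a) (mix b).
Proof.
move=> U'E a b; rewrite /mix payoff_suml {1}/payoff; apply: eq_bigr => k _.
rewrite payoff_sumr mulr_sumr; apply: eq_bigr => l _.
by rewrite U'E mulrA.
Qed.

Variable (hNN' : (N <= N')%N).
Hypothesis p_pure : forall i : 'I_N, p (widen_ord hNN' i) = evec R i.

Definition pure_copy (z : 'I_N -> R) : 'I_N' -> R :=
  fun k => \sum_(i < N | widen_ord hNN' i == k) z i.

Lemma sum_pure_copy (z : 'I_N -> R) (F : 'I_N' -> R) :
  \sum_(k < N') pure_copy z k * F k = \sum_(i < N) z i * F (widen_ord hNN' i).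
Proof.
rewrite (partition_big (widen_ord hNN') xpredT) //=; apply: eq_bigr => k _.
by rewrite mulr_suml; apply: eq_bigr => i /eqP <-.
Qed.

Lemma simplex_pure_copy z : simplex z -> simplex (pure_copy z).
Proof.
move=> [z_ge0 z_sum1]; split=> [k|]; first exact: sumr_ge0.
rewrite -z_sum1 -[LHS](eq_bigr _ (fun k _ => mulr1 _)) sum_pure_copy.
by under eq_bigr do rewrite mulr1.
Qed.

Lemma mix_pure_copy z : mix (pure_copy z) = z.
Proof.
apply/funext => j; rewrite /mix sum_pure_copy (bigD1 j) //=.
rewrite p_pure /evec eqxx mulr1.
by rewrite big1 ?addr0 // => i i_neq; rewrite p_pure /evec (negbTE i_neq) mulr0.
Qed.

Lemma BR_mix (U : 'M[R]_N) (U' : 'M[R]_N') :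
  (forall k l, U' k l = payoff U (p k) (p l)) ->
  forall a b, BR U' a b -> BR U (mix a) (mix b).
Proof.
move=> U'E a b [b_simplex b_best]; split; first exact: simplex_mix.
move=> z z_simplex; rewrite -(mix_pure_copy z) -!(payoff_mix U'E).
exact/b_best/simplex_pure_copy.
Qed.

End Mixing.

Theorem proposition7 (R : realType) (N N' : nat) (U : 'M[R]_N) (U' : 'M[R]_N')
  (hNN' : (N <= N')%N) (p : 'I_N' -> 'I_N -> R) (x' : R -> 'I_N' -> R) :
  built_on U U' hNN' p ->
  BR_solution U' x' ->
  BR_solution U (fun t j => \sum_(k < N') x' t k * p k j).
Proof.
move=> [p_simplex [U'E p_pure]] [x'_simplex [x'_ac x'_ae]].
split; [|split].
- by move=> t t_ge0; apply: simplex_mix; last exact: x'_simplex.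
- move=> b b_ge0 j; apply: abs_continuous_on_sum => k.
  exact/abs_continuous_onMr/x'_ac.
- apply: (@filterS _ _ (ae_filter_ringOfSetsType lebesgue_measure) _ _ _ x'_ae).
  move=> t x't t_ge0.
  have [x'_derivable [y' y'_BR x'_ode]] := x't t_ge0.
  have x_derive j := is_derive_sum_mulr (fun k => p k j) x'_derivable.
  split=> [j|]; first by apply: ex_derive; exact: x_derive.
  exists (mix p y'); first exact: BR_mix.
  move=> j; rewrite derive1E derive_val /mix -sumrB.
  by apply: eq_bigr => k _; rewrite -mulrBl -x'_ode derive1E.
Qed.
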